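(* Let $f:\mathbb{N}\to\mathbb{N}$ be a sub-linear order and let $f^*$ be its star-transform. Then: (1) $f^*$ is a sub-linear order; (2) if $f$ is computable then $f^*$ is computable; (3) if $f$ is upper semi-computable then $f^*$ is upper semi-computable; (4) for all $n,i\in\mathbb{N}$, $0\le f^*(n)-f^*(f^{(i)}(n))\le i$.
   Context: An order is a total, non-decreasing, unbounded function $\mathbb{N}\to\mathbb{N}$; it is sub-linear if $f(n)=o(n)$. $f^{(k)}$ denotes the $k$-fold iterate of $f$ ($f^{(0)}$ is the identity). For a sub-linear order $f$, let $p_f=\max\{n : f(n)\ge n\}$ (well defined by sub-linearity), and define the star-transform $f^*(n)=\min\{k : f^{(k)}(n)\le p_f\}$. A function $g:\mathbb{N}\to\mathbb{N}$ is upper semi-computable if the predicate ''$g(n)\le k$'' is computably enumerable uniformly in $n,k$. *)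

(* Computability is formalized via Kleene's partial recursive
   functions (mu-recursive functions) with a big-step relational semantics. *)
From Stdlib Require Import Arith List ClassicalEpsilon.
Import ListNotations.

(* Programs act on argument lists; [Proj i] returns the i-th argument
   (default 0), [Prec f g] recurses on the first argument,
   [Mu f] is unbounded minimisation on the first argument. *)
Inductive prog : Type :=
| PZero : prog
| PSucc : prog
| PProj : nat -> prog
| PComp : prog -> list prog -> prog
| PPrec : prog -> prog -> prog
| PMu   : prog -> prog.

Inductive eval : prog -> list nat -> nat -> Prop :=
| ev_zero : forall v, eval PZero v 0
| ev_succ : forall v, eval PSucc v (S (hd 0 v))
| ev_proj : forall i v, eval (PProj i) v (nth i v 0)
| ev_comp : forall f gs v ws y,
    evals gs v ws -> eval f ws y -> eval (PComp f gs) v y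
| ev_prec0 : forall f g v y,
    eval f v y -> eval (PPrec f g) (0 :: v) y
| ev_precS : forall f g n v r y,
    eval (PPrec f g) (n :: v) r -> eval g (n :: r :: v) y ->
    eval (PPrec f g) (S n :: v) y
| ev_mu : forall f v y,
    eval f (y :: v) 0 ->
    (forall z, z < y -> exists w, eval f (z :: v) (S w)) ->
    eval (PMu f) v y
with evals : list prog -> list nat -> list nat -> Prop :=
| evs_nil : forall v, evals [] v []
| evs_cons : forall g gs v w ws,
    eval g v w -> evals gs v ws -> evals (g :: gs) v (w :: ws).

Definition computable (f : nat -> nat) : Prop :=
  exists e : prog, forall n, eval e [n] (f n).

Definition ce_rel (P : nat -> nat -> Prop) : Prop :=
  exists e : prog, forall n k, P n k <-> exists y, eval e [n; k] y.

Definition upper_semi_computable (g : nat -> nat) : Prop :=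
  ce_rel (fun n k => g n <= k).

Definition is_order (f : nat -> nat) : Prop :=
  (forall m n, m <= n -> f m <= f n) /\ (forall k, exists n, k <= f n).

(* f(n) = o(n): for every m > 0, eventually m * f n <= n
   (i.e. f n / n <= 1/m eventually). *)
Definition sublinear (f : nat -> nat) : Prop :=
  forall m, 0 < m -> exists N, forall n, N <= n -> m * f n <= n.

Definition sublinear_order (f : nat -> nat) : Prop :=
  is_order f /\ sublinear f.

Definition iter_fun (f : nat -> nat) (k : nat) (n : nat) : nat :=
  Nat.iter k f n.

(* p_f = max { n | f n >= n } (chosen by Hilbert's epsilon; it is the
   maximum whenever that maximum exists, e.g. for sub-linear f). *)
Definition pf (f : nat -> nat) : nat :=
  epsilon (inhabits 0) (fun p => p <= f p /\ forall n, n <= f n -> n <= p).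

Definition fstar (f : nat -> nat) (n : nat) : nat :=
  epsilon (inhabits 0)
    (fun k => iter_fun f k n <= pf f /\
              forall j, iter_fun f j n <= pf f -> k <= j).

From Stdlib Require Import Arith Lia List Classical ClassicalEpsilon.
Import ListNotations.

(* Since [f] is monotone, fixes [p_f] and satisfies [f n < n] above [p_f], the
   orbit of [n] enters [[0, p_f]] and stays there, so
   [f*(n) <= k <-> f^(k)(n) <= p_f]. This gives [f*(f^(i)(n)) = f*(n) - i], hence
   (4), and with [f*(n) <= f*(f n) + 1] and [2 f n <= n] for large [n] also the
   sub-linearity of [f*]. For (2), [f*(n)] is the least [k] with
   [f^(k)(n) <= p_f]. For (3), running the enumeration of [f x <= y] for [s]
   steps yields approximations of [f] from above that are eventually exact; by
   monotonicity their iterates approximate [f^(k)] from above, so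
   [f^(k)(n) <= p_f] is witnessed by some finite [s]. *)

Section ProgInd.
Variable Q : prog -> Prop.
Hypothesis Q_zero : Q PZero.
Hypothesis Q_succ : Q PSucc.
Hypothesis Q_proj : forall i, Q (PProj i).
Hypothesis Q_comp : forall f gs, Q f -> Forall Q gs -> Q (PComp f gs).
Hypothesis Q_prec : forall f g, Q f -> Q g -> Q (PPrec f g).
Hypothesis Q_mu : forall f, Q f -> Q (PMu f).

Fixpoint prog_nested_ind (h : prog) : Q h :=
  match h with
  | PZero => Q_zero
  | PSucc => Q_succ
  | PProj i => Q_proj i
  | PComp f gs =>
      Q_comp f gs (prog_nested_ind f)
        ((fix all (l : list prog) : Forall Q l :=
            match l with
            | [] => Forall_nil _
            | g :: r => Forall_cons _ (prog_nested_ind g) (all r)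
            end) gs)
  | PPrec f g => Q_prec f g (prog_nested_ind f) (prog_nested_ind g)
  | PMu f => Q_mu f (prog_nested_ind f)
  end.
End ProgInd.

Lemma evals_length gs v ws : evals gs v ws -> length ws = length gs.
Proof. revert ws; induction gs; intros ws H; inversion H; subst; simpl; auto. Qed.

Lemma eval_det h v y y' : eval h v y -> eval h v y' -> y = y'.
Proof.
  revert v y y'; induction h using prog_nested_ind; intros v y y' H1 H2.
  - inversion H1; inversion H2; subst; auto.
  - inversion H1; inversion H2; subst; auto.
  - inversion H1; inversion H2; subst; auto.
  - inversion H1 as [| | |? ? ? ws ? A F| | |]; subst.
    inversion H2 as [| | |? ? ? ws' ? B F'| | |]; subst.
    enough (ws = ws') by (subst; eauto).
    clear H1 H2 F F'. revert ws ws' A B.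
    induction H; intros ws ws' A B; inversion A; inversion B; subst; f_equal; eauto.
  - destruct v as [|n v]; [inversion H1|].
    revert y y' H1 H2; induction n; intros y y' H1 H2; inversion H1; inversion H2; subst.
    + eauto.
    + assert (r = r0) by eauto. subst. eauto.
  - inversion H1 as [| | | | | |? ? ? Hy Hlt]; inversion H2 as [| | | | | |? ? ? Hy' Hlt']; subst.
    destruct (lt_eq_lt_dec y y') as [[Hyy|Hyy]|Hyy]; auto; exfalso.
    + destruct (Hlt' y Hyy) as [w Hw]. pose proof (IHh _ _ _ Hy Hw). discriminate.
    + destruct (Hlt y' Hyy) as [w Hw]. pose proof (IHh _ _ _ Hy' Hw). discriminate.
Qed.

Lemma evals_det gs v ws ws' : evals gs v ws -> evals gs v ws' -> ws = ws'.
Proof.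
  revert ws ws'; induction gs; intros ws ws' A B; inversion A; inversion B; subst; auto.
  f_equal; eauto using eval_det.
Qed.

Lemma eval_PComp_inv F gs v ws y : eval (PComp F gs) v y -> evals gs v ws -> eval F ws y.
Proof.
  intros H Hws. inversion H as [| | |? ? ? ws' ? A B| | |]; subst.
  now rewrite (evals_det _ _ _ _ Hws A).
Qed.

Definition PPred := PPrec PZero (PProj 0).
Definition PCond := PPrec (PProj 0) (PProj 3).
Definition PIf c x y := PComp PCond [c; x; y].
Fixpoint PConst c := match c with 0 => PZero | S c => PComp PSucc [PConst c] end.
Fixpoint PSubConst p := match p with 0 => PProj 0 | S p => PComp PPred [PSubConst p] end.
Fixpoint PAddConst p := match p with 0 => PProj 0 | S p => PComp PSucc [PAddConst p] end.
Definition PPredProj i := PComp PPred [PProj i].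

Lemma eval_proj_nth i v y : nth i v 0 = y -> eval (PProj i) v y.
Proof. intros <-; constructor. Qed.

Lemma eval_PComp1 f g v w y : eval g v w -> eval f [w] y -> eval (PComp f [g]) v y.
Proof. intros. econstructor; eauto. repeat constructor; auto. Qed.

Lemma eval_PPred x v : eval PPred (x :: v) (pred x).
Proof.
  induction x; [repeat constructor|].
  econstructor; [apply IHx | apply (ev_proj 0 (x :: pred x :: v))].
Qed.

Lemma eval_PCond a b c : eval PCond [a; b; c] (match a with 0 => b | S _ => c end).
Proof.
  induction a.
  - constructor. apply (ev_proj 0 [b; c]).
  - econstructor; [apply IHa | apply (ev_proj 3 [a; _; b; c])].
Qed.

Lemma eval_PIf c x y v a b1 b2 : eval c v a -> eval x v b1 -> eval y v b2 ->
  eval (PIf c x y) v (match a with 0 => b1 | S _ => b2 end).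
Proof. intros. econstructor; [|apply eval_PCond]. repeat constructor; auto. Qed.

Lemma eval_PConst c v : eval (PConst c) v c.
Proof. induction c; simpl; [constructor | eapply eval_PComp1; eauto; constructor]. Qed.

Lemma eval_PSubConst p x v : eval (PSubConst p) (x :: v) (x - p).
Proof.
  induction p; simpl.
  - rewrite Nat.sub_0_r. apply (ev_proj 0 (x :: v)).
  - eapply eval_PComp1; eauto. replace (x - S p) with (pred (x - p)) by lia. apply eval_PPred.
Qed.

Lemma eval_PAddConst p x v : eval (PAddConst p) (x :: v) (x + p).
Proof.
  induction p; simpl.
  - rewrite Nat.add_0_r. apply (ev_proj 0 (x :: v)).
  - eapply eval_PComp1; eauto. rewrite Nat.add_succ_r. apply ev_succ.
Qed.

Lemma evals_projs pre v L : L = pre ++ v ->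
  evals (map PProj (seq (length pre) (length v))) L v.
Proof.
  intros ->. revert pre; induction v as [|a v IH]; intros pre; simpl; constructor.
  - apply eval_proj_nth. rewrite app_nth2, Nat.sub_diag by lia. reflexivity.
  - specialize (IH (pre ++ [a])). rewrite length_app, <- app_assoc, Nat.add_1_r in IH.
    exact IH.
Qed.

Lemma evals_pred_projs pre us :
  evals (map PPredProj (seq (length pre) (length us))) (pre ++ us) (map pred us).
Proof.
  revert pre; induction us as [|a us IH]; intros pre; simpl; constructor.
  - eapply eval_PComp1; [|apply eval_PPred].
    apply eval_proj_nth. rewrite app_nth2, Nat.sub_diag by lia. reflexivity.
  - specialize (IH (pre ++ [a])). rewrite length_app, <- app_assoc, Nat.add_1_r in IH.
    exact IH.
Qed.

(** * A clocked interpreter *)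

Fixpoint PGuard (l : list nat) (body : prog) : prog :=
  match l with [] => body | i :: l => PIf (PProj i) PZero (PGuard l body) end.

Definition call_mu_body F a := PComp F (PProj 2 :: PProj 0 :: map PProj (seq 3 a)).

Definition mu_step F a :=
  PIf (PProj 1)
    (PIf (call_mu_body F a) (PConst 1)
       (PIf (PComp PPred [call_mu_body F a]) (PComp PSucc [PComp PSucc [PProj 0]]) PZero))
    (PProj 1).

Definition mu_search F a := PPrec PZero (mu_step F a).

Definition call_prec_step G a := PComp G (PProj 2 :: PProj 0 :: PPredProj 1 :: map PProj (seq 3 a)).

Definition prec_loop F G a := PPrec F (PIf (PProj 1) PZero (call_prec_step G a)).

Definition comp_body F n := PComp F (PProj 0 :: map PPredProj (seq 1 n)).

(* [clocked h a] runs [h] on an argument list of length [a] for a time budget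
   given as an extra first argument [t]: output [S z] means "halted with [z]",
   output [0] means "not yet". In the [PMu] case [t] also bounds the search;
   the search state is [0] (all candidates so far rejected), [1] (some
   candidate ran out of time) or [S (S y)] (found [y]). *)
Fixpoint clocked (h : prog) (a : nat) : prog :=
  match h with
  | PZero => PComp PSucc [PZero]
  | PSucc => PComp PSucc [PComp PSucc [PProj 1]]
  | PProj i => PComp PSucc [PProj (S i)]
  | PComp f gs =>
      PComp (PGuard (seq 1 (length gs)) (comp_body (clocked f (length gs)) (length gs)))
            (PProj 0 :: map (fun g => clocked g a) gs)
  | PPrec f g =>
      match a with
      | 0 => PZero
      | S a' =>
          PComp (prec_loop (clocked f a') (clocked g (S (S a'))) a')
                (PProj 1 :: PProj 0 :: map PProj (seq 2 a'))
      end
  | PMu f =>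
      PComp PPred [PComp (mu_search (clocked f (S a)) a)
                         (PProj 0 :: PProj 0 :: map PProj (seq 1 a))]
  end.

Definition clock_total h := forall t v, exists r, eval (clocked h (length v)) (t :: v) r.

Definition clock_sound h :=
  forall t v z, eval (clocked h (length v)) (t :: v) (S z) -> eval h v z.

Definition clock_complete h := forall v z, eval h v z ->
  exists t0, forall t, t0 <= t -> eval (clocked h (length v)) (t :: v) (S z).

Lemma eval_PGuard_body l body L y : eval body L y ->
  (forall i, In i l -> nth i L 0 <> 0) -> eval (PGuard l body) L y.
Proof.
  revert body L y; induction l as [|a l IH]; intros body L y Hb Hnz; simpl; auto.
  pose proof (eval_PIf (PProj a) PZero (PGuard l body) L _ 0 y (ev_proj a L) (ev_zero L)
                (IH _ _ _ Hb (fun i Hi => Hnz i (or_intror Hi)))) as H.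
  destruct (nth a L 0) eqn:E; [|exact H]. now destruct (Hnz a (or_introl eq_refl)).
Qed.

Lemma PGuard_total l body L : (exists y, eval body L y) -> exists r, eval (PGuard l body) L r.
Proof.
  revert body L; induction l as [|a l IH]; intros body L [y H]; simpl; eauto.
  destruct (IH body L) as [r Hr]; eauto.
  eexists. apply eval_PIf; eauto; constructor.
Qed.

Lemma eval_PGuard_zero l body L i : (exists y, eval body L y) ->
  In i l -> nth i L 0 = 0 -> eval (PGuard l body) L 0.
Proof.
  revert body L; induction l as [|a l IH]; intros body L Hb Hi Hz; [destruct Hi|simpl].
  destruct (PGuard_total l body L Hb) as [r Hr].
  destruct Hi as [->|Hi].
  - pose proof (eval_PIf (PProj i) PZero (PGuard l body) L _ 0 r (ev_proj i L) (ev_zero L) Hr).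
    now rewrite Hz in H.
  - pose proof (eval_PIf (PProj a) PZero (PGuard l body) L _ 0 0 (ev_proj a L) (ev_zero L)
                  (IH body L Hb Hi Hz)).
    now destruct (nth a L 0).
Qed.

Lemma nth_nonzero_guard t us : Forall (fun u => u <> 0) us ->
  forall i, In i (seq 1 (length us)) -> nth i (t :: us) 0 <> 0.
Proof.
  intros Hus i Hi. apply in_seq in Hi. destruct i; [lia|]. simpl.
  rewrite Forall_nth in Hus. apply Hus. lia.
Qed.

Lemma eval_call_mu_body F m r t v u : eval F (t :: m :: v) u ->
  eval (call_mu_body F (length v)) (m :: r :: t :: v) u.
Proof.
  intros. econstructor; eauto.
  do 2 (constructor; [apply eval_proj_nth; reflexivity|]).
  now apply (evals_projs [m; r; t]).
Qed.

Lemma eval_call_prec_step G i r t v u : eval G (t :: i :: pred r :: v) u ->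
  eval (call_prec_step G (length v)) (i :: r :: t :: v) u.
Proof.
  intros. econstructor; eauto.
  do 2 (constructor; [apply eval_proj_nth; reflexivity|]).
  constructor; [eapply eval_PComp1; [apply eval_proj_nth; reflexivity | apply eval_PPred]|].
  now apply (evals_projs [i; r; t]).
Qed.

Definition mu_state (r u m : nat) : nat :=
  match r with
  | 0 => match u with 0 => 1 | 1 => S (S m) | _ => 0 end
  | S _ => r
  end.

Lemma eval_mu_step F m r t v u : eval F (t :: m :: v) u ->
  eval (mu_step F (length v)) (m :: r :: t :: v) (mu_state r u m).
Proof.
  intros Hu. pose proof (eval_call_mu_body F m r t v u Hu) as HF.
  pose proof (eval_PIf _ _ _ _ _ _ _ HF (eval_PConst 1 _)
      (eval_PIf _ _ _ _ _ _ _ (eval_PComp1 _ _ _ _ _ HF (eval_PPred u []))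
         (eval_PComp1 _ _ _ _ _ (eval_PComp1 _ _ _ _ _ (ev_proj 0 (m :: r :: t :: v))
            (ev_succ [m])) (ev_succ [S m])) (ev_zero _))) as Hinner.
  pose proof (eval_PIf _ _ _ _ _ _ _ (ev_proj 1 (m :: r :: t :: v)) Hinner
                (ev_proj 1 (m :: r :: t :: v))) as Hstep.
  unfold mu_state. destruct r, u as [|[|u]]; exact Hstep.
Qed.

Lemma evals_prec_args t n v :
  evals (PProj 1 :: PProj 0 :: map PProj (seq 2 (length v))) (t :: n :: v) (n :: t :: v).
Proof.
  do 2 (constructor; [apply eval_proj_nth; reflexivity|]).
  now apply (evals_projs [t; n]).
Qed.

Lemma evals_mu_args t v :
  evals (PProj 0 :: PProj 0 :: map PProj (seq 1 (length v))) (t :: v) (t :: t :: v).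
Proof.
  do 2 (constructor; [apply eval_proj_nth; reflexivity|]).
  now apply (evals_projs [t]).
Qed.

Lemma eval_comp_body F t us u : eval F (t :: map pred us) u ->
  eval (comp_body F (length us)) (t :: us) u.
Proof.
  intros. econstructor; eauto.
  constructor; [apply eval_proj_nth; reflexivity | apply (evals_pred_projs [t])].
Qed.

Lemma eval_prec_loop_S F G n t v r u :
  eval (prec_loop F G (length v)) (n :: t :: v) r -> eval G (t :: n :: pred r :: v) u ->
  eval (prec_loop F G (length v)) (S n :: t :: v) (match r with 0 => 0 | S _ => u end).
Proof.
  intros Hr Hu. econstructor; [exact Hr|].
  pose proof (eval_PIf _ _ _ _ _ _ _ (ev_proj 1 (n :: r :: t :: v)) (ev_zero _)
                (eval_call_prec_step G n r t v u Hu)) as H.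
  destruct r; exact H.
Qed.

Lemma mu_search_total F t v : (forall m, exists u, eval F (t :: m :: v) u) ->
  forall m, exists s, eval (mu_search F (length v)) (m :: t :: v) s.
Proof.
  intros HF m; induction m as [|m [r Hr]]; [eexists; repeat constructor|].
  destruct (HF m) as [u Hu].
  eexists. econstructor; [apply Hr | apply eval_mu_step; eauto].
Qed.

Lemma clocked_list_total gs t v : Forall clock_total gs ->
  exists us, evals (map (fun g => clocked g (length v)) gs) (t :: v) us.
Proof.
  induction 1 as [|g gs Hg _ [us Hus]]; simpl; [eexists; constructor|].
  destruct (Hg t v) as [u Hu]. eexists; constructor; eauto.
Qed.

Lemma clock_total_all h : clock_total h.
Proof.
  induction h using prog_nested_ind; intros t v; simpl.
  - eexists. eapply eval_PComp1; constructor.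
  - eexists. eapply eval_PComp1; [eapply eval_PComp1|]; constructor.
  - eexists. eapply eval_PComp1; constructor.
  - destruct (clocked_list_total gs t v H) as [us Hus].
    pose proof (evals_length _ _ _ Hus) as Hlen. rewrite length_map in Hlen.
    destruct (IHh t (map pred us)) as [u Hu]. rewrite length_map, Hlen in Hu.
    destruct (PGuard_total (seq 1 (length gs)) _ (t :: us)
                (ex_intro _ u (eval_comp_body _ t us u Hu))) as [r Hr].
    rewrite Hlen in Hr.
    exists r. econstructor; [|exact Hr]. constructor; [constructor | exact Hus].
  - destruct v as [|n v]; [eexists; constructor|].
    assert (Hloop : forall n, exists s,
               eval (prec_loop (clocked h1 (length v)) (clocked h2 (S (S (length v)))) (length v))
                    (n :: t :: v) s).
    { induction n0 as [|n0 [r Hr]].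
      - destruct (IHh1 t v) as [s Hs]. exists s. now constructor.
      - destruct (IHh2 t (n0 :: pred r :: v)) as [u Hu].
        eexists. apply (eval_prec_loop_S _ _ _ _ _ _ _ Hr Hu). }
    destruct (Hloop n) as [s Hs]. exists s. econstructor; [apply evals_prec_args | exact Hs].
  - destruct (mu_search_total (clocked h (S (length v))) t v (fun m => IHh t (m :: v)) t)
      as [s Hs].
    eexists. eapply eval_PComp1; [|apply eval_PPred].
    econstructor; [apply evals_mu_args | exact Hs].
Qed.

Lemma clocked_list_sound gs t v us : Forall clock_sound gs ->
  evals (map (fun g => clocked g (length v)) gs) (t :: v) us ->
  Forall (fun u => u <> 0) us -> evals gs v (map pred us).
Proof.
  intros Hgs; revert us; induction Hgs as [|g gs Hg _ IH]; intros us Hus Hnz;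
    inversion Hus as [|? ? ? u us' Hu Hus']; subst; simpl; constructor;
    inversion Hnz; subst; auto.
  destruct u as [|u]; [congruence|]. now apply (Hg t).
Qed.

Lemma clock_sound_comp f gs : clock_sound f -> Forall clock_sound gs -> clock_sound (PComp f gs).
Proof.
  intros Hf Hgs t v z H. simpl in H.
  assert (Htot : Forall clock_total gs) by (apply Forall_forall; intros; apply clock_total_all).
  destruct (clocked_list_total gs t v Htot) as [us Hus].
  pose proof (evals_length _ _ _ Hus) as Hlen. rewrite length_map in Hlen.
  pose proof (eval_PComp_inv _ _ _ (t :: us) _ H (evs_cons _ _ _ _ _ (ev_proj 0 (t :: v)) Hus))
    as Hguard.
  rewrite <- Hlen in Hguard.
  destruct (clock_total_all f t (map pred us)) as [u Hu].
  pose proof (eval_comp_body _ t us u ltac:(rewrite length_map in Hu; exact Hu)) as Hbody.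
  destruct (in_dec Nat.eq_dec 0 us) as [Hin|Hnin].
  - destruct (In_nth us 0 0 Hin) as [j [Hj Hj0]].
    pose proof (eval_PGuard_zero (seq 1 (length us)) _ _ (S j) (ex_intro _ u Hbody)
                  ltac:(apply in_seq; lia) Hj0) as Hzero.
    discriminate (eval_det _ _ _ _ Hguard Hzero).
  - assert (Hnz : Forall (fun u => u <> 0) us)
      by (apply Forall_forall; intros x Hx ->; contradiction).
    pose proof (eval_det _ _ _ _ Hguard (eval_PGuard_body _ _ _ _ Hbody
                  (nth_nonzero_guard t us Hnz))) as <-.
    econstructor; [apply (clocked_list_sound gs t v us Hgs Hus Hnz) | exact (Hf _ _ _ Hu)].
Qed.

Lemma clock_sound_prec f g : clock_sound f -> clock_sound g -> clock_sound (PPrec f g).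
Proof.
  intros Hf Hg t [|n v] z H; simpl in H; [inversion H|].
  pose proof (eval_PComp_inv _ _ _ _ _ H (evals_prec_args t n v)) as Hloop. clear H.
  revert z Hloop; induction n as [|n IH]; intros z Hloop.
  - inversion Hloop; subst. constructor. now apply (Hf t).
  - inversion Hloop as [| | | | |? ? ? ? r ? Hr _|]; subst.
    destruct (clock_total_all g t (n :: pred r :: v)) as [u Hu].
    pose proof (eval_det _ _ _ _ Hloop (eval_prec_loop_S _ _ _ _ _ _ _ Hr Hu)) as E.
    destruct r as [|r]; [discriminate|]. subst u.
    econstructor; [apply IH, Hr | apply (Hg t), Hu].
Qed.

Definition mu_rejects F t v z := exists w, eval F (t :: z :: v) (S (S w)).

Lemma mu_search_inv F t v : (forall m, exists u, eval F (t :: m :: v) u) ->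
  forall m s, eval (mu_search F (length v)) (m :: t :: v) s ->
  (s = 0 /\ forall z, z < m -> mu_rejects F t v z) \/ s = 1 \/
  (exists y, s = S (S y) /\ eval F (t :: y :: v) 1 /\ forall z, z < y -> mu_rejects F t v z).
Proof.
  intros HF; induction m as [|m IH]; intros s H.
  - inversion H as [| | | |? ? ? ? H0| |]; subst. inversion H0; subst.
    left; split; [reflexivity | intros; lia].
  - inversion H as [| | | | |? ? ? ? r ? Hr Hs|]; subst.
    destruct (HF m) as [u Hu].
    pose proof (eval_det _ _ _ _ Hs (eval_mu_step _ m r t v u Hu)) as ->.
    destruct (IH r Hr) as [[-> Hz]|[->|[y [-> [Hy Hz]]]]]; unfold mu_state.
    + destruct u as [|[|u]]; [right; left; reflexivity | right; right; eauto |].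
      left; split; [reflexivity|]. intros z Hz'.
      destruct (Nat.eq_dec z m) as [->|]; [exists u; exact Hu | apply Hz; lia].
    + right; left; reflexivity.
    + right; right; eauto.
Qed.

Lemma clock_sound_mu f : clock_sound f -> clock_sound (PMu f).
Proof.
  intros Hf t v z H. simpl in H.
  inversion H as [| | |? ? ? ws ? Hws Hp| | |]; subst.
  inversion Hws as [|? ? ? s ? Hs Hnil]; subst. inversion Hnil; subst.
  pose proof (eval_det _ _ _ _ Hp (eval_PPred s [])) as E.
  pose proof (eval_PComp_inv _ _ _ _ _ Hs (evals_mu_args t v)) as Hsearch.
  destruct (mu_search_inv (clocked f (S (length v))) t v (fun m => clock_total_all f t (m :: v))
              _ _ Hsearch)
    as [[-> _]|[->|[y [-> [Hy Hrej]]]]]; try discriminate.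
  injection E as ->. constructor.
  - now apply (Hf t).
  - intros x Hx. destruct (Hrej x Hx) as [w Hw]. exists w. now apply (Hf t).
Qed.

Lemma clock_sound_all h : clock_sound h.
Proof.
  induction h using prog_nested_ind.
  - intros t v z H. simpl in H.
    pose proof (eval_det _ _ _ _ H (eval_PComp1 _ _ _ _ _ (ev_zero _) (ev_succ _))) as E.
    injection E as ->. constructor.
  - intros t v z H. simpl in H.
    assert (Hs : eval (PComp PSucc [PComp PSucc [PProj 1]]) (t :: v) (S (S (hd 0 v)))).
    { eapply eval_PComp1; [|apply (ev_succ [S (hd 0 v)])].
      eapply eval_PComp1; [|apply (ev_succ [hd 0 v])].
      apply eval_proj_nth. now destruct v. }
    pose proof (eval_det _ _ _ _ H Hs) as E. injection E as ->. constructor.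
  - intros t v z H. simpl in H.
    pose proof (eval_det _ _ _ _ H (eval_PComp1 _ _ _ _ _ (ev_proj (S i) (t :: v)) (ev_succ _)))
      as E.
    injection E as ->. constructor.
  - now apply clock_sound_comp.
  - now apply clock_sound_prec.
  - now apply clock_sound_mu.
Qed.

Lemma clocked_list_complete gs v ws : Forall clock_complete gs -> evals gs v ws ->
  exists t0, forall t, t0 <= t ->
    evals (map (fun g => clocked g (length v)) gs) (t :: v) (map S ws).
Proof.
  intros Hgs; revert ws; induction Hgs as [|g gs Hg _ IH]; intros ws Hws;
    inversion Hws as [|? ? ? w ws' Hw Hws']; subst; simpl.
  - exists 0; intros; constructor.
  - destruct (Hg _ _ Hw) as [t1 H1]. destruct (IH ws' Hws') as [t2 H2].
    exists (max t1 t2). intros t Ht. constructor; [apply H1 | apply H2]; lia.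
Qed.

Lemma clock_complete_comp f gs :
  clock_complete f -> Forall clock_complete gs -> clock_complete (PComp f gs).
Proof.
  intros Hf Hgs v z H. inversion H as [| | |? ? ? ws ? Hws Hfz| | |]; subst.
  destruct (clocked_list_complete gs v ws Hgs Hws) as [t1 H1].
  pose proof (evals_length _ _ _ Hws) as Hlen.
  destruct (Hf _ _ Hfz) as [t2 H2].
  exists (max t1 t2). intros t Ht. simpl.
  econstructor; [constructor; [apply eval_proj_nth; reflexivity | apply H1; lia]|].
  rewrite <- Hlen, <- (length_map S ws).
  apply eval_PGuard_body.
  - apply eval_comp_body. rewrite map_map, length_map. simpl. rewrite map_id.
    apply H2; lia.
  - apply nth_nonzero_guard. apply Forall_map, Forall_forall; intros; lia.
Qed.

Lemma clock_complete_prec f g :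
  clock_complete f -> clock_complete g -> clock_complete (PPrec f g).
Proof.
  intros Hf Hg [|n v] z H; [inversion H|].
  enough (Hloop : exists t0, forall t, t0 <= t ->
            eval (prec_loop (clocked f (length v)) (clocked g (S (S (length v)))) (length v))
                 (n :: t :: v) (S z)).
  { destruct Hloop as [t0 Ht]. exists t0. intros t Htt. simpl.
    econstructor; [apply evals_prec_args | auto]. }
  revert z H; induction n as [|n IH]; intros z H;
    inversion H as [| | | |? ? ? ? Hz|? ? ? ? r ? Hr Hz|]; subst.
  - destruct (Hf _ _ Hz) as [t0 Ht]. exists t0. intros. constructor; auto.
  - destruct (IH _ Hr) as [t1 H1]. destruct (Hg _ _ Hz) as [t2 H2].
    exists (max t1 t2). intros t Ht.
    apply (eval_prec_loop_S _ _ _ _ _ (S r)); [apply H1 | apply H2]; lia.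
Qed.

Lemma mu_search_rejected F t v m : (forall z, z < m -> mu_rejects F t v z) ->
  eval (mu_search F (length v)) (m :: t :: v) 0.
Proof.
  induction m as [|m IH]; intros Hrej; [repeat constructor|].
  destruct (Hrej m) as [w Hw]; [lia|].
  econstructor; [apply IH; intros; apply Hrej; lia | apply (eval_mu_step _ m 0 t v _ Hw)].
Qed.

Lemma mu_search_found F t v y : (forall m, exists u, eval F (t :: m :: v) u) ->
  eval F (t :: y :: v) 1 -> (forall z, z < y -> mu_rejects F t v z) ->
  forall m, y < m -> eval (mu_search F (length v)) (m :: t :: v) (S (S y)).
Proof.
  intros HF Hy Hrej; induction m as [|m IH]; intros Hm; [lia|].
  destruct (Nat.eq_dec m y) as [->|].
  - econstructor; [apply mu_search_rejected, Hrej | apply (eval_mu_step _ y 0 t v _ Hy)].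
  - destruct (HF m) as [u Hu].
    econstructor; [apply IH; lia | apply (eval_mu_step _ m (S (S y)) t v _ Hu)].
Qed.

Lemma clock_complete_mu f : clock_complete f -> clock_complete (PMu f).
Proof.
  intros Hf v z H. inversion H as [| | | | | |? ? ? Hz Hlt]; subst.
  assert (Hrej : forall y, y <= z -> exists t0, forall t, t0 <= t -> forall x, x < y ->
                   mu_rejects (clocked f (S (length v))) t v x).
  { induction y as [|y IH]; intros Hy; [exists 0; intros; lia|].
    destruct IH as [t1 H1]; [lia|].
    destruct (Hlt y) as [w Hw]; [lia|].
    destruct (Hf _ _ Hw) as [t2 H2].
    exists (max t1 t2). intros t Ht x Hx. destruct (Nat.eq_dec x y) as [->|].
    - exists w. apply H2; lia.
    - apply H1; lia. }
  destruct (Hrej z (le_n _)) as [t1 H1].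
  destruct (Hf _ _ Hz) as [t2 H2].
  exists (max (max t1 t2) (S z)). intros t Ht. simpl.
  eapply eval_PComp1; [|apply (eval_PPred (S (S z)) [])].
  econstructor; [apply evals_mu_args|].
  apply mu_search_found; [intro m; apply (clock_total_all f t (m :: v)) | apply H2 | apply H1 |];
    lia.
Qed.

Lemma clock_complete_all h : clock_complete h.
Proof.
  induction h using prog_nested_ind.
  - intros v z Hz. inversion Hz; subst. exists 0. intros t _.
    eapply eval_PComp1; constructor.
  - intros v z Hz. inversion Hz; subst. exists 0. intros t _.
    eapply eval_PComp1; [|apply (ev_succ [S (hd 0 v)])].
    eapply eval_PComp1; [|apply (ev_succ [hd 0 v])].
    apply eval_proj_nth. now destruct v.
  - intros v z Hz. inversion Hz; subst. exists 0. intros t _.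
    eapply eval_PComp1; [apply (ev_proj (S i) (t :: v)) | constructor].
  - now apply clock_complete_comp.
  - now apply clock_complete_prec.
  - now apply clock_complete_mu.
Qed.

(** * The star-transform *)

Lemma least_exists (Q : nat -> Prop) m : Q m -> exists k, Q k /\ forall j, Q j -> k <= j.
Proof.
  induction m as [m IH] using lt_wf_ind; intros Hm.
  destruct (classic (exists j, j < m /\ Q j)) as [[j [Hj Qj]]|Hnone].
  - exact (IH j Hj Qj).
  - exists m; split; [exact Hm|]. intros j Qj.
    destruct (le_lt_dec m j); [assumption | exfalso; eauto].
Qed.

Lemma greatest_exists (Q : nat -> Prop) B m : Q m -> (forall n, Q n -> n <= B) ->
  exists p, Q p /\ forall n, Q n -> n <= p.
Proof.
  revert m; induction B as [|B IH]; intros m Hm HB.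
  - exists m. split; [exact Hm|]. intros n Hn. pose proof (HB n Hn); pose proof (HB m Hm); lia.
  - destruct (classic (Q (S B))) as [HSB|HSB]; [exists (S B); split; auto|].
    apply (IH m Hm). intros n Hn. pose proof (HB n Hn).
    destruct (Nat.eq_dec n (S B)) as [->|]; [contradiction | lia].
Qed.

Section Star.
Variable f : nat -> nat.
Hypothesis f_mono : forall m n, m <= n -> f m <= f n.
Hypothesis f_sublinear : sublinear f.

Notation P := (pf f).

Lemma pf_spec : P <= f P /\ forall n, n <= f n -> n <= P.
Proof.
  unfold pf. apply epsilon_spec.
  destruct (f_sublinear 2) as [N HN]; [lia|].
  apply (greatest_exists _ N 0); [lia|].
  intros n Hn. destruct (le_lt_dec N n) as [HNn|]; [|lia].
  specialize (HN n HNn). lia.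
Qed.

Lemma f_pf : f P = P.
Proof.
  destruct pf_spec as [H1 H2].
  enough (f P <= P) by lia.
  apply H2, f_mono, H1.
Qed.

Lemma f_le_pf x : x <= P -> f x <= P.
Proof. intros. rewrite <- f_pf. now apply f_mono. Qed.

Lemma f_lt_above_pf x : P < x -> f x < x.
Proof.
  intros Hx. destruct (le_lt_dec x (f x)) as [Hle|]; [|assumption].
  pose proof (proj2 pf_spec x Hle). lia.
Qed.

Lemma f_le_add_pf x : f x <= x + P.
Proof.
  destruct (le_lt_dec x P) as [Hx|Hx];
    [pose proof (f_le_pf x Hx) | pose proof (f_lt_above_pf x Hx)]; lia.
Qed.

Lemma iter_fun_add p q n : iter_fun f (p + q) n = iter_fun f p (iter_fun f q n).
Proof. apply Nat.iter_add. Qed.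

Lemma iter_fun_mono k m n : m <= n -> iter_fun f k m <= iter_fun f k n.
Proof. induction k; simpl; auto. Qed.

Lemma iter_fun_le_pf k x : x <= P -> iter_fun f k x <= P.
Proof. induction k; simpl; auto using f_le_pf. Qed.

Lemma iter_fun_reaches_pf n : exists k, iter_fun f k n <= P.
Proof.
  induction n as [n IH] using lt_wf_ind.
  destruct (le_lt_dec n P) as [Hn|Hn]; [now exists 0|].
  destruct (IH (f n) (f_lt_above_pf n Hn)) as [k Hk].
  exists (S k). unfold iter_fun. now rewrite Nat.iter_succ_r.
Qed.

Lemma fstar_spec n :
  iter_fun f (fstar f n) n <= P /\ forall j, iter_fun f j n <= P -> fstar f n <= j.
Proof.
  unfold fstar. apply epsilon_spec.
  destruct (iter_fun_reaches_pf n) as [k Hk]. exact (least_exists _ k Hk).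
Qed.

Lemma fstar_le_iff n k : fstar f n <= k <-> iter_fun f k n <= P.
Proof.
  destruct (fstar_spec n) as [H1 H2]. split; [intros Hk | apply H2].
  replace k with ((k - fstar f n) + fstar f n) by lia.
  rewrite iter_fun_add. now apply iter_fun_le_pf.
Qed.

Lemma fstar_iter_fun n i : fstar f (iter_fun f i n) = fstar f n - i.
Proof.
  assert (E : forall k, fstar f (iter_fun f i n) <= k <-> fstar f n <= k + i)
    by (intro k; now rewrite !fstar_le_iff, iter_fun_add).
  pose proof (proj1 (E _) (le_n _)).
  pose proof (proj2 (E (fstar f n - i)) ltac:(lia)).
  lia.
Qed.

Lemma fstar_mono m n : m <= n -> fstar f m <= fstar f n.
Proof.
  intros Hmn. apply fstar_le_iff.
  eapply Nat.le_trans; [apply iter_fun_mono, Hmn | now apply fstar_le_iff].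
Qed.

Lemma fstar_le_S_fstar_f n : fstar f n <= S (fstar f (f n)).
Proof. pose proof (fstar_iter_fun n 1). simpl in *. lia. Qed.

Lemma fstar_linear_bound m : 0 < m -> exists D, forall n, m * fstar f n <= n + D.
Proof.
  intros Hm. destruct (f_sublinear 2) as [N HN]; [lia|].
  set (K := N + 2 * m). exists (m * fstar f K).
  intro n. induction n as [n IH] using lt_wf_ind.
  destruct (le_lt_dec n K) as [HnK|HnK].
  - pose proof (fstar_mono _ _ HnK). nia.
  - assert (Hhalf : 2 * f n <= n) by (apply HN; lia).
    specialize (IH (f n) ltac:(lia)).
    pose proof (fstar_le_S_fstar_f n). nia.
Qed.

Lemma fstar_sublinear : sublinear (fstar f).
Proof.
  intros m Hm. destruct (fstar_linear_bound (2 * m)) as [D HD]; [lia|].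
  exists D. intros n Hn. specialize (HD n). nia.
Qed.

Hypothesis f_unbounded : forall k, exists n, k <= f n.

Lemma iter_fun_unbounded j k : exists n, k <= iter_fun f j n.
Proof.
  revert k; induction j as [|j IH]; intros k; [now exists k|].
  destruct (f_unbounded k) as [x Hx]. destruct (IH x) as [n Hn].
  exists n. simpl. eapply Nat.le_trans; [exact Hx | now apply f_mono].
Qed.

Lemma fstar_unbounded k : exists n, k <= fstar f n.
Proof.
  destruct k as [|k]; [exists 0; lia|].
  destruct (iter_fun_unbounded k (S P)) as [n Hn]. exists n.
  destruct (le_lt_dec (S k) (fstar f n)) as [|Hlt]; [assumption|].
  assert (iter_fun f k n <= P) by (apply fstar_le_iff; lia). lia.
Qed.

End Star.

(** * Computability of the star-transform *)

Lemma eval_PMu_least e v G y : (forall k, eval e (k :: v) (G k)) ->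
  G y = 0 -> (forall k, k < y -> G k <> 0) -> eval (PMu e) v y.
Proof.
  intros He Hy Hlt. constructor; [rewrite <- Hy; apply He|].
  intros k Hk. exists (pred (G k)). specialize (Hlt k Hk).
  replace (S (pred (G k))) with (G k) by lia. apply He.
Qed.

Lemma PMu_halts_iff e v : (forall k, exists y, eval e (k :: v) y) ->
  (exists y, eval (PMu e) v y) <-> exists k, eval e (k :: v) 0.
Proof.
  intros He. split.
  - intros [y Hy]. inversion Hy; subst. eauto.
  - intros [k Hk]. destruct (least_exists (fun k => eval e (k :: v) 0) k Hk) as [y [Hy Hmin]].
    exists y. constructor; [exact Hy|]. intros j Hj.
    destruct (He j) as [[|w] Hw]; [pose proof (Hmin j Hw); lia | eauto].
Qed.

Definition iterate_prog e := PPrec (PProj 0) (PComp e [PProj 1]).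

Lemma eval_iterate_prog e g n k : (forall x, eval e [x] (g x)) ->
  eval (iterate_prog e) (k :: [n]) (Nat.iter k g n).
Proof.
  intros He. induction k; [constructor; apply (ev_proj 0 [n])|].
  econstructor; [exact IHk|].
  eapply eval_PComp1; [apply (ev_proj 1 (k :: Nat.iter k g n :: [n])) | apply He].
Qed.

Lemma computable_fstar f : sublinear_order f -> computable f -> computable (fstar f).
Proof.
  intros [[f_mono _] f_sublinear] [e He].
  exists (PMu (PComp (PSubConst (pf f)) [iterate_prog e])). intro n.
  apply (eval_PMu_least _ _ (fun k => iter_fun f k n - pf f)).
  - intro k. eapply eval_PComp1; [apply eval_iterate_prog, He | apply eval_PSubConst].
  - pose proof (proj1 (fstar_le_iff f f_mono f_sublinear n _) (le_n _)). lia.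
  - intros k Hk Hz.
    assert (Hle : iter_fun f k n <= pf f) by lia.
    apply (fstar_le_iff f f_mono f_sublinear) in Hle. lia.
Qed.

Record upper_approximation (a : prog) (g : nat -> nat) : Prop := {
  approx_total : forall s x, exists y, eval a [s; x] y;
  approx_above : forall s x y, eval a [s; x] y -> g x <= y;
  approx_eventually : forall x, exists s0, forall s, s0 <= s -> eval a [s; x] (g x)
}.

(* On [i :: [s; x]], [scan E] returns [S y] for the least [y < i] accepted by
   [E] within time [s] (i.e. [E] certifies [g x <= y]), and [0] if there is
   none. *)
Definition scan_step E :=
  PIf (PProj 1) (PIf (PComp E [PProj 2; PProj 3; PProj 0]) PZero (PComp PSucc [PProj 0]))
      (PProj 1).

Definition scan E := PPrec PZero (scan_step E).

Definition scan_bound c := PComp (PAddConst (S c)) [PProj 1].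

Definition approx_prog E c :=
  PComp (PIf (PProj 0) (PProj 1) (PComp PPred [PProj 0]))
        [PComp (scan E) [scan_bound c; PProj 0; PProj 1]; scan_bound c].

Section UpperApproximation.
Variables (g : nat -> nat) (c : nat) (e : prog).
Hypothesis e_domain : forall x y, g x <= y <-> exists z, eval e [x; y] z.
Hypothesis g_le : forall x, g x <= x + c.

Let E := clocked e 2.

Lemma clocked_domain_total s x y : exists u, eval E [s; x; y] u.
Proof. apply (clock_total_all e s [x; y]). Qed.

Lemma clocked_domain_sound s x y z : eval E [s; x; y] (S z) -> g x <= y.
Proof. intros. apply e_domain. exists z. now apply (clock_sound_all e s [x; y]). Qed.

Lemma clocked_domain_complete x y : g x <= y ->
  exists s0, forall s, s0 <= s -> exists z, eval E [s; x; y] (S z).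
Proof.
  intros Hxy. apply e_domain in Hxy as [z Hz].
  destruct (clock_complete_all e [x; y] z Hz) as [s0 Hs0]. eauto.
Qed.

Lemma eval_scan_step i r s x u : eval E [s; x; i] u ->
  eval (scan_step E) (i :: r :: [s; x])
       (match r with 0 => match u with 0 => 0 | S _ => S i end | S _ => r end).
Proof.
  intros Hu.
  assert (HE : eval (PComp E [PProj 2; PProj 3; PProj 0]) (i :: r :: [s; x]) u)
    by (econstructor; [repeat constructor | exact Hu]).
  pose proof (eval_PIf _ _ _ _ _ _ _ (ev_proj 1 (i :: r :: [s; x]))
                (eval_PIf _ _ _ _ _ _ _ HE (ev_zero _)
                   (eval_PComp1 _ _ _ _ _ (ev_proj 0 (i :: r :: [s; x])) (ev_succ [i])))
                (ev_proj 1 (i :: r :: [s; x]))) as H.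
  destruct r; exact H.
Qed.

Lemma scan_total s x i : exists r, eval (scan E) (i :: [s; x]) r.
Proof.
  induction i as [|i [r Hr]]; [eexists; repeat constructor|].
  destruct (clocked_domain_total s x i) as [u Hu].
  eexists. econstructor; [exact Hr | apply eval_scan_step, Hu].
Qed.

Lemma scan_sound s x i r : eval (scan E) (i :: [s; x]) r -> r = 0 \/ g x <= pred r.
Proof.
  revert r; induction i as [|i IH]; intros r Hr.
  - inversion Hr as [| | | |? ? ? ? H0| |]; subst. inversion H0. auto.
  - inversion Hr as [| | | | |? ? ? ? r' ? Hr' Hs|]; subst.
    destruct (clocked_domain_total s x i) as [u Hu].
    rewrite (eval_det _ _ _ _ Hs (eval_scan_step i r' s x u Hu)).
    destruct r' as [|r'].
    + destruct u; [auto|]. right. eapply clocked_domain_sound, Hu.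
    + destruct (IH _ Hr') as [?|Hle]; [discriminate | auto].
Qed.

Lemma scan_eventually x : exists s0, forall s, s0 <= s ->
  forall i, g x < i -> eval (scan E) (i :: [s; x]) (S (g x)).
Proof.
  destruct (clocked_domain_complete x (g x) (le_n _)) as [s0 Hs0]. exists s0. intros s Hs.
  assert (Hbelow : forall i, i <= g x -> eval (scan E) (i :: [s; x]) 0).
  { induction i as [|i IH]; intros Hi; [repeat constructor|].
    destruct (clocked_domain_total s x i) as [[|u] Hu].
    - econstructor; [apply IH; lia | apply (eval_scan_step i 0 s x 0 Hu)].
    - apply clocked_domain_sound in Hu. lia. }
  induction i as [|i IH]; intros Hi; [lia|].
  destruct (Nat.eq_dec i (g x)) as [->|].
  - destruct (Hs0 s Hs) as [z Hz].
    econstructor; [apply Hbelow; lia | apply (eval_scan_step (g x) 0 s x (S z) Hz)].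
  - destruct (clocked_domain_total s x i) as [u Hu].
    econstructor; [apply IH; lia | apply (eval_scan_step i (S (g x)) s x u Hu)].
Qed.

Lemma eval_approx_prog s x r : eval (scan E) ((x + S c) :: [s; x]) r ->
  eval (approx_prog E c) [s; x] (match r with 0 => x + S c | S _ => pred r end).
Proof.
  intros Hr.
  assert (Hb : eval (scan_bound c) [s; x] (x + S c))
    by (eapply eval_PComp1; [apply (ev_proj 1 [s; x]) | apply eval_PAddConst]).
  econstructor.
  - constructor; [econstructor; [|exact Hr] | constructor; [exact Hb | constructor]].
    constructor; [exact Hb|]. constructor; [apply (ev_proj 0 [s; x])|].
    constructor; [apply (ev_proj 1 [s; x]) | constructor].
  - pose proof (eval_PIf _ _ _ _ _ _ _ (ev_proj 0 [r; x + S c]) (ev_proj 1 [r; x + S c])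
                  (eval_PComp1 _ _ _ _ _ (ev_proj 0 [r; x + S c]) (eval_PPred r []))) as H.
    destruct r; exact H.
Qed.

Lemma usc_upper_approximation : upper_approximation (approx_prog E c) g.
Proof.
  split.
  - intros s x. destruct (scan_total s x (x + S c)) as [r Hr].
    eexists. exact (eval_approx_prog _ _ _ Hr).
  - intros s x y Hy. destruct (scan_total s x (x + S c)) as [r Hr].
    rewrite (eval_det _ _ _ _ Hy (eval_approx_prog _ _ _ Hr)).
    destruct (scan_sound _ _ _ _ Hr) as [->|Hle]; [pose proof (g_le x); lia|].
    destruct r; [pose proof (g_le x); lia | exact Hle].
  - intros x. destruct (scan_eventually x) as [s0 Hs0]. exists s0. intros s Hs.
    pose proof (g_le x).
    exact (eval_approx_prog _ _ _ (Hs0 s Hs (x + S c) ltac:(lia))).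
Qed.

End UpperApproximation.

Definition iterate_approx a := PPrec (PProj 1) (PComp a [PProj 2; PProj 1]).

Section IterateApproximation.
Variables (g : nat -> nat) (a : prog).
Hypothesis g_mono : forall m n, m <= n -> g m <= g n.
Hypothesis a_approx : upper_approximation a g.

Lemma eval_iterate_approx_S k r s n y : eval a [s; r] y ->
  eval (PComp a [PProj 2; PProj 1]) (k :: r :: [s; n]) y.
Proof. intros. econstructor; [repeat constructor | eassumption]. Qed.

Lemma iterate_approx_total s n k : exists x, eval (iterate_approx a) (k :: [s; n]) x.
Proof.
  induction k as [|k [r Hr]]; [eexists; constructor; apply (ev_proj 1 [s; n])|].
  destruct (approx_total _ _ a_approx s r) as [y Hy].
  eexists. econstructor; [exact Hr | apply eval_iterate_approx_S, Hy].
Qed.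

Lemma iterate_approx_above s n k x :
  eval (iterate_approx a) (k :: [s; n]) x -> Nat.iter k g n <= x.
Proof.
  revert x; induction k as [|k IH]; intros x Hx.
  - inversion Hx as [| | | |? ? ? ? H0| |]; subst. inversion H0; subst. simpl; auto.
  - inversion Hx as [| | | | |? ? ? ? r ? Hr Hs|]; subst.
    destruct (approx_total _ _ a_approx s r) as [y Hy].
    rewrite (eval_det _ _ _ _ Hs (eval_iterate_approx_S k r s n y Hy)).
    eapply Nat.le_trans; [apply g_mono, IH, Hr | exact (approx_above _ _ a_approx _ _ _ Hy)].
Qed.

Lemma iterate_approx_eventually n k : exists s0, forall s, s0 <= s ->
  eval (iterate_approx a) (k :: [s; n]) (Nat.iter k g n).
Proof.
  induction k as [|k [s1 H1]]; [exists 0; intros; constructor; apply (ev_proj 1 [s; n])|].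
  destruct (approx_eventually _ _ a_approx (Nat.iter k g n)) as [s2 H2].
  exists (max s1 s2). intros s Hs.
  econstructor; [apply H1; lia | apply eval_iterate_approx_S, H2; lia].
Qed.

(* Search for a time [s] at which the approximation of [g^(k)(n)] drops to [B]. *)
Lemma ce_iter_le B : ce_rel (fun n k => Nat.iter k g n <= B).
Proof.
  set (test := PComp (PSubConst B) [PComp (iterate_approx a) [PProj 2; PProj 0; PProj 1]]).
  assert (Htest : forall s n k x, eval (iterate_approx a) (k :: [s; n]) x ->
                    eval test (s :: [n; k]) (x - B)).
  { intros. eapply eval_PComp1; [|apply eval_PSubConst].
    econstructor; [repeat constructor | eassumption]. }
  exists (PMu test). intros n k. rewrite PMu_halts_iff.
  - split.
    + intros Hle. destruct (iterate_approx_eventually n k) as [s0 Hs0].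
      exists s0. replace 0 with (Nat.iter k g n - B) by lia. apply Htest, Hs0; lia.
    + intros [s Hs]. destruct (iterate_approx_total s n k) as [x Hx].
      pose proof (eval_det _ _ _ _ Hs (Htest _ _ _ _ Hx)).
      pose proof (iterate_approx_above _ _ _ _ Hx). lia.
  - intros s. destruct (iterate_approx_total s n k) as [x Hx]. eauto.
Qed.

End IterateApproximation.

Lemma usc_fstar f : sublinear_order f -> upper_semi_computable f ->
  upper_semi_computable (fstar f).
Proof.
  intros [[f_mono _] f_sublinear] [e He].
  pose proof (usc_upper_approximation f (pf f) e (fun x y => He x y)
                (f_le_add_pf f f_mono f_sublinear)) as Happrox.
  destruct (ce_iter_le f _ f_mono Happrox (pf f)) as [p Hp].
  exists p. intros n k. rewrite (fstar_le_iff f f_mono f_sublinear). apply Hp.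
Qed.

Theorem lemma3 (f : nat -> nat) :
  sublinear_order f ->
  sublinear_order (fstar f)
  /\ (computable f -> computable (fstar f))
  /\ (upper_semi_computable f -> upper_semi_computable (fstar f))
  /\ (forall n i,
        fstar f (iter_fun f i n) <= fstar f n
        /\ fstar f n - fstar f (iter_fun f i n) <= i).
Proof.
  intros Hf. pose proof Hf as [[f_mono f_unbounded] f_sublinear].
  split; [|split; [|split]].
  - split; [split|].
    + apply fstar_mono; assumption.
    + apply fstar_unbounded; assumption.
    + apply fstar_sublinear; assumption.
  - now apply computable_fstar.
  - now apply usc_fstar.
  - intros n i. rewrite (fstar_iter_fun f f_mono f_sublinear). lia.
Qed.
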